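(* Let $A$ be a two-dimensional evolution algebra over an arbitrary field $\mathbb{K}$ such that $A^2=A$. Then the square $\mathfrak{S}(A)$ is equal to one of $\mathfrak{D}_1,\mathfrak{D}_2,\mathfrak{D}_3,\mathfrak{D}_4,\mathfrak{D}_5$. Moreover, up to isomorphism: (i) if $\mathfrak{S}(A)=\mathfrak{D}_1$ then $A\cong A_1$ (and $A_1$ is the only such algebra); (ii) if $\mathfrak{S}(A)=\mathfrak{D}_2$ then $A\cong A_{2,\alpha}$ for some $\alpha\in\mathbb{K}^\times$, and the isomorphism classes of such algebras correspond bijectively to the elements $\widetilde{\alpha}\in G_3/\!\sim$ via $\widetilde\alpha\mapsto A_{2,\alpha}$; (iii) if $\mathfrak{S}(A)=\mathfrak{D}_3$ then $A\cong A_{3,\alpha}$ for some $\alpha\in\mathbb{K}^\times$, and for each $\alpha\in\mathbb{K}^\times$ there is exactly one such algebra, $A_{3,\alpha}$ (distinct $\alpha$ giving non-isomorphic algebras); (iv) if $\mathfrak{S}(A)=\mathfrak{D}_4$ then $A\cong A_{4,\alpha}$ for some $\alpha\in\mathbb{K}^\times$, and for each $\alpha\in\mathbb{K}^\times$ there is exactly one such algebra, $A_{4,\alpha}$ (distinct $\alpha$ giving non-isomorphic algebras); (v) if $\mathfrak{S}(A)=\mathfrak{D}_5$ then $A\cong A_{5,\alpha,\beta}$ for some $\alpha,\beta\in\mathbb{K}^\times$ with $\alpha\beta\neq1$, and for each such pair $(\alpha,\beta)$ there is exactly one such algebra, $A_{5,\alpha,\beta}$, up to permutation of the components of the pair (i.e.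 $A_{5,\alpha,\beta}\cong A_{5,\alpha',\beta'}$ iff $(\alpha',\beta')\in\{(\alpha,\beta),(\beta,\alpha)\}$).
   Context: An evolution algebra over a field $\mathbb{K}$ is a $\mathbb{K}$-algebra $A$ with a basis $\{e_i\}$ (a natural basis) such that $e_ie_j=0$ for $i\neq j$. For a two-dimensional evolution algebra with natural basis $B=\{e_1,e_2\}$ write $e_1^2=\omega_{11}e_1+\omega_{21}e_2$, $e_2^2=\omega_{12}e_1+\omega_{22}e_2$. The pseudo-square of $A$ relative to $B$ is the set of ''edges'' $E_B\subseteq\{L,T,R,D\}$ (left, top, right, bottom), where $L\in E_B$ iff $\omega_{11}\neq0$, $T\in E_B$ iff $\omega_{12}\neq0$, $R\in E_B$ iff $\omega_{22}\neq0$, $D\in E_B$ iff $\omega_{21}\neq0$. The square $\mathfrak{S}(A)$ is the set of all pseudo-squares $E_B$ as $B$ ranges over all natural bases of $A$. Define the following sets of pseudo-squares: $\mathfrak{D}_1=\{\{L,R\}\}$, $\mathfrak{D}_2=\{\{T,D\}\}$, $\mathfrak{D}_3=\{\{L,T,R\},\{L,R,D\}\}$, $\mathfrak{D}_4=\{\{L,T,D\},\{T,R,D\}\}$, $\mathfrak{D}_5=\{\{L,T,R,D\}\}$. The algebras (each with natural basis $\{e_1,e_2\}$): $A_1$: $e_1^2=e_1$, $e_2^2=e_2$; $A_{2,\alpha}$: $e_1^2=e_2$, $e_2^2=\alpha e_1$; $A_{3,\alpha}$: $e_1^2=e_1$, $e_2^2=\alpha e_1+e_2$; $A_{4,\alpha}$: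 $e_1^2=\alpha e_2$, $e_2^2=e_1+e_2$; $A_{5,\alpha,\beta}$: $e_1^2=e_1+\beta e_2$, $e_2^2=\alpha e_1+e_2$ (here $\alpha,\beta\in\mathbb{K}^\times$, and $\alpha\beta\neq1$ for $A_{5,\alpha,\beta}$). $G_3$ denotes the group $\mathbb{K}^\times/(\mathbb{K}^\times)^3$, $\overline\rho$ the class of $\rho\in\mathbb{K}^\times$; $\sim$ is the equivalence relation on $G_3$ with $\overline\alpha\sim\overline\beta$ iff $\overline\alpha=\overline\beta$ or $\overline\alpha=\overline\beta^2$, and $\widetilde\alpha$ denotes the class of $\overline\alpha$ in $G_3/\!\sim$. *)

From HB Require Import structures.
From mathcomp Require Import all_boot all_order all_algebra.
Set Implicit Arguments. Unset Strict Implicit. Unset Printing Implicit Defensive.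
Import GRing.Theory.
Local Open Scope ring_scope.

Inductive edge := eL | eT | eR | eD.

Definition edge_code (e : edge) : 'I_4 :=
  match e with eL => inord 0 | eT => inord 1 | eR => inord 2 | eD => inord 3 end.
Definition edge_decode (i : 'I_4) : edge :=
  match val i with 0 => eL | 1 => eT | 2 => eR | _ => eD end.
Lemma edge_codeK : cancel edge_code edge_decode.
Proof. by case; rewrite /edge_decode /= inordK. Qed.

HB.instance Definition _ := Finite.copy edge (can_type edge_codeK).

(* ---------- Two-dimensional evolution algebras ----------
   The algebra is K^2 (row vectors 'rV[K]_2) with natural basis e_1, e_2
   (the standard basis), and structure matrix W with
       e_j^2 = \sum_i W i j e_i,
   i.e. W 0 0 = w11, W 0 1 = w12, W 1 0 = w21, W 1 1 = w22. *)

Definition evmul (K : fieldType) (W : 'M[K]_2) (x y : 'rV[K]_2) : 'rV[K]_2 :=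
  \sum_(j < 2) (x 0 j * y 0 j) *: (\row_(i < 2) W i j).

Definition smx (K : fieldType) (w11 w12 w21 w22 : K) : 'M[K]_2 :=
  \matrix_(i < 2, j < 2)
    if (val i == 0%N) then (if val j == 0%N then w11 else w12)
    else (if val j == 0%N then w21 else w22).

Definition square_full (K : fieldType) (W : 'M[K]_2) : Prop :=
  forall z : 'rV[K]_2, exists s : seq ('rV[K]_2 * 'rV[K]_2),
    z = \sum_(p <- s) evmul W p.1 p.2.

Definition natural_basis (K : fieldType) (W : 'M[K]_2) (f1 f2 : 'rV[K]_2) : Prop :=
  (forall a b : K, a *: f1 + b *: f2 = 0 -> a = 0 /\ b = 0) /\
  evmul W f1 f2 = 0 /\ evmul W f2 f1 = 0.

Definition pseudo_of (K : fieldType) (w11 w12 w21 w22 : K) : {set edge} :=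
  [set e | match e with
           | eL => w11 != 0 | eT => w12 != 0 | eR => w22 != 0 | eD => w21 != 0
           end].

Definition in_square (K : fieldType) (W : 'M[K]_2) (E : {set edge}) : Prop :=
  exists (f1 f2 : 'rV[K]_2) (w11 w12 w21 w22 : K),
    [/\ natural_basis W f1 f2,
        evmul W f1 f1 = w11 *: f1 + w21 *: f2,
        evmul W f2 f2 = w12 *: f1 + w22 *: f2 &
        E = pseudo_of w11 w12 w21 w22].

Definition square_is (K : fieldType) (W : 'M[K]_2) (S : {set {set edge}}) : Prop :=
  forall E : {set edge}, in_square W E <-> E \in S.

Definition D1 : {set {set edge}} := [set [set eL; eR]].
Definition D2 : {set {set edge}} := [set [set eT; eD]].
Definition D3 : {set {set edge}} := [set [set eL; eT; eR]; [set eL; eR; eD]].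
Definition D4 : {set {set edge}} := [set [set eL; eT; eD]; [set eT; eR; eD]].
Definition D5 : {set {set edge}} := [set [set eL; eT; eR; eD]].

Definition ev_iso (K : fieldType) (W W' : 'M[K]_2) : Prop :=
  exists M : 'M[K]_2, M \in unitmx /\
    forall x y : 'rV[K]_2, evmul W' (x *m M) (y *m M) = evmul W x y *m M.

Definition A1 (K : fieldType) : 'M[K]_2 := smx 1 0 0 1.          (* e1^2=e1, e2^2=e2 *)
Definition A2 (K : fieldType) (a : K) : 'M[K]_2 := smx 0 a 1 0.   (* e1^2=e2, e2^2=a e1 *)
Definition A3 (K : fieldType) (a : K) : 'M[K]_2 := smx 1 a 0 1.   (* e1^2=e1, e2^2=a e1+e2 *)
Definition A4 (K : fieldType) (a : K) : 'M[K]_2 := smx 0 1 a 1.   (* e1^2=a e2, e2^2=e1+e2 *)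
Definition A5 (K : fieldType) (a b : K) : 'M[K]_2 := smx 1 a b 1. (* e1^2=e1+b e2, e2^2=a e1+e2 *)

(* G_3 = K^x/(K^x)^3 : equality of classes of nonzero a, b *)
Definition cube_class_eq (K : fieldType) (a b : K) : Prop :=
  exists c : K, c != 0 /\ a = b * c ^+ 3.
(* the relation ~ on G_3 : abar = bbar or abar = bbar^2 *)
Definition sim3 (K : fieldType) (a b : K) : Prop :=
  cube_class_eq a b \/ cube_class_eq a (b ^+ 2).

From mathcomp Require Import all_boot all_algebra ring.
Import GRing.Theory.
Local Open Scope ring_scope.
Set Implicit Arguments. Unset Strict Implicit.

(* The product of the evolution algebra with structure matrix W is
   (u, v) |-> (u .* v) W^T, where .* is the coordinatewise product.  Hence A^2
   is the column space of W, so A^2 = A iff W is invertible, and then uv = 0 iff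
   u .* v = 0.  Consequently natural bases and isomorphisms are monomial: a
   natural basis is (a e_1, d e_2) or (b e_2, c e_1), and an isomorphism is a
   diagonal matrix, possibly preceded by the swap of e_1 and e_2.  So the square
   of A consists of the pseudo-squares of W and of W with e_1 and e_2 swapped,
   which only depend on the zero pattern of W, and two such algebras are
   isomorphic iff one structure matrix is a diagonal rescaling of the other or
   of its swap.  The
   classification then amounts to choosing the rescaling that normalises the
   entries, and each uniqueness claim to solving the rescaling equations. *)

Lemma edge_eqE (e e' : edge) :
  (e == e') = match e, e' with eL, eL | eT, eT | eR, eR | eD, eD => true | _, _ => false end.
Proof. by apply/eqP/idP => [->|]; case: e; case: e'. Qed.

Section EvolutionAlgebra2.
Variable K : fieldType.
Implicit Types (a b c d p q r s x y : K) (W M : 'M[K]_2) (u v : 'rV[K]_2).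

Lemma evmulE W u v : evmul W u v = map2_mx *%R u v *m W^T.
Proof. by apply/rowP => i; rewrite summxE !mxE; apply: eq_bigr => j _; rewrite !mxE. Qed.

Lemma square_full_unitmx W : square_full W <-> W \in unitmx.
Proof.
split=> [full | Wu z]; last first.
  exists [:: (z *m invmx W^T, const_mx 1)]; rewrite big_seq1 evmulE /=.
  have -> : map2_mx *%R (z *m invmx W^T) (const_mx 1) = z *m invmx W^T.
    by apply/rowP => j; rewrite !mxE mulr1.
  by rewrite mulmxKV ?unitmx_tr.
apply: contraT; rewrite unitmxE unitfE negbK => /det0P[w nz_w wW].
have sums_killed (t : seq ('rV[K]_2 * 'rV[K]_2)) :
    (\sum_(xy <- t) evmul W xy.1 xy.2) *m w^T = 0.
  rewrite mulmx_suml big1 // => xy _.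
  by rewrite evmulE -mulmxA -trmx_mul wW trmx0 mulmx0.
rewrite -(negbTE nz_w) -trmx_eq0 -[w^T]mul1mx; apply/eqP/row_matrixP => i.
by rewrite row_mul row0; have [t ->] := full (row i 1%:M); apply: sums_killed.
Qed.

Lemma evmul_eq0 W u v : W \in unitmx -> (evmul W u v == 0) = (map2_mx *%R u v == 0).
Proof.
rewrite -unitmx_tr evmulE => WTu; apply/eqP/eqP => [uvW0 | ->]; last exact: mul0mx.
by rewrite -(mulmxK WTu (map2_mx _ u v)) uvW0 mul0mx.
Qed.

Definition ev_hom W W' M := forall u v, evmul W' (u *m M) (v *m M) = evmul W u v *m M.

Lemma ev_hom_mul W1 W2 W3 M N : ev_hom W1 W2 M -> ev_hom W2 W3 N -> ev_hom W1 W3 (M *m N).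
Proof. by move=> homM homN u v; rewrite !mulmxA homN homM. Qed.

Lemma ev_iso_refl W : ev_iso W W.
Proof. by exists 1%:M; split=> [|u v]; rewrite ?unitmx1 ?mulmx1. Qed.

Lemma ev_iso_trans W1 W2 W3 : ev_iso W1 W2 -> ev_iso W2 W3 -> ev_iso W1 W3.
Proof.
move=> [M [Mu homM]] [N [Nu homN]]; exists (M *m N).
by rewrite unitmx_mul Mu Nu; split=> //; apply: ev_hom_mul homM homN.
Qed.

Lemma in_square_iso W W' E : ev_iso W W' -> in_square W E -> in_square W' E.
Proof.
case=> M [Mu hom] [f1 [f2 [w11 [w12 [w21 [w22 [[indep [e12 e21]] e1 e2 ->]]]]]]].
exists (f1 *m M), (f2 *m M), w11, w12, w21, w22; split=> //.
- split=> [x y|]; last by rewrite !hom e12 e21 !mul0mx.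
  rewrite !scalemxAl -mulmxDl => /(congr1 (mulmx^~ (invmx M))).
  by rewrite mulmxK // mul0mx; apply: indep.
- by rewrite hom e1 mulmxDl -!scalemxAl.
- by rewrite hom e2 mulmxDl -!scalemxAl.
Qed.

Lemma ord2P (j : 'I_2) : j = ord0 \/ j = ord_max.
Proof. by case: j => [[|[|//]]] ?; [left|right]; apply: val_inj. Qed.

Definition row2 a b : 'rV[K]_2 := \row_(j < 2) if val j == 0%N then a else b.

Lemma row2_eta u : u = row2 (u 0 ord0) (u 0 ord_max).
Proof. by apply/rowP => j; case: (ord2P j) => ->; rewrite mxE. Qed.

Lemma row2_inj a b c d : row2 a b = row2 c d -> a = c /\ b = d.
Proof.
move=> e; have entry j := congr1 (fun u => u 0 j) e.
by split; [have := entry ord0 | have := entry ord_max]; rewrite !mxE.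
Qed.

Lemma row2_0 : row2 0 0 = 0.
Proof. by apply/rowP => j; rewrite !mxE if_same. Qed.

Lemma row2_eq0 a b : (row2 a b == 0) = (a == 0) && (b == 0).
Proof.
apply/eqP/andP => [|[/eqP-> /eqP->]]; last exact: row2_0.
by rewrite -row2_0 => /row2_inj[-> ->].
Qed.

Lemma row2D a b c d : row2 a b + row2 c d = row2 (a + c) (b + d).
Proof. by apply/rowP => j; rewrite !mxE; case: ifP. Qed.

Lemma row2Z k a b : k *: row2 a b = row2 (k * a) (k * b).
Proof. by apply/rowP => j; rewrite !mxE; case: ifP. Qed.

Lemma map2_row2 a b c d : map2_mx *%R (row2 a b) (row2 c d) = row2 (a * c) (b * d).
Proof. by apply/rowP => j; rewrite !mxE; case: ifP. Qed.

Lemma smx_eta W :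
  W = smx (W ord0 ord0) (W ord0 ord_max) (W ord_max ord0) (W ord_max ord_max).
Proof.
by apply/matrixP => i j; case: (ord2P i) => ->; case: (ord2P j) => ->; rewrite mxE.
Qed.

Lemma smx_ind (P : 'M[K]_2 -> Prop) : (forall p q r s, P (smx p q r s)) -> forall W, P W.
Proof. by move=> hP W; rewrite [W]smx_eta. Qed.

Lemma smx_inj p q r s (p' q' r' s' : K) :
  smx p q r s = smx p' q' r' s' -> [/\ p = p', q = q', r = r' & s = s'].
Proof.
move=> e; have entry i j := congr1 (fun W : 'M[K]_2 => W i j) e.
by split; [have := entry ord0 ord0 | have := entry ord0 ord_max
  | have := entry ord_max ord0 | have := entry ord_max ord_max]; rewrite !mxE.
Qed.

Lemma mul_row2_smx a b p q r s :
  row2 a b *m smx p q r s = row2 (a * p + b * r) (a * q + b * s).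
Proof.
by apply/rowP => j; rewrite !mxE big_ord_recl big_ord1 !mxE; case: (ord2P j) => ->.
Qed.

Lemma mul_smx p q r s (p' q' r' s' : K) : smx p q r s *m smx p' q' r' s' =
  smx (p * p' + q * r') (p * q' + q * s') (r * p' + s * r') (r * q' + s * s').
Proof.
apply/matrixP => i j; rewrite !mxE big_ord_recl big_ord1 !mxE.
by case: (ord2P i) => ->; case: (ord2P j) => ->.
Qed.

Lemma det_smx p q r s : \det (smx p q r s) = p * s - q * r.
Proof.
by rewrite (expand_det_row _ 0) big_ord_recl big_ord1 /cofactor !det_mx11 !mxE /=; ring.
Qed.

Lemma unitmx_smx p q r s : (smx p q r s \in unitmx) = (p * s - q * r != 0).
Proof. by rewrite unitmxE unitfE det_smx. Qed.

Lemma square_full_smx p q r s : square_full (smx p q r s) <-> p * s - q * r != 0.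
Proof. by rewrite square_full_unitmx unitmx_smx. Qed.

Lemma evmul_row2 p q r s a b c d :
  evmul (smx p q r s) (row2 a b) (row2 c d) =
  row2 (a * c * p + b * d * q) (a * c * r + b * d * s).
Proof.
by apply/rowP => j; rewrite summxE big_ord_recl big_ord1 !mxE; case: (ord2P j) => ->.
Qed.

(* The structure matrix of [smx p q r s] in the natural basis (x^-1 e_1, y^-1 e_2). *)
Definition rescale x y p q r s : 'M[K]_2 :=
  smx (p / x) (x * q / y ^+ 2) (y * r / x ^+ 2) (s / y).

Lemma ev_hom_swap p q r s : ev_hom (smx p q r s) (smx s r q p) (smx 0 1 1 0).
Proof.
move=> u v; rewrite [u]row2_eta [v]row2_eta !mul_row2_smx !evmul_row2 mul_row2_smx.
by congr row2; ring.
Qed.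

Lemma ev_hom_diagP x y p q r s W : x != 0 -> y != 0 ->
  ev_hom (smx p q r s) W (smx x 0 0 y) <-> W = rescale x y p q r s.
Proof.
move=> x_nz y_nz; rewrite [W]smx_eta.
move: (W ord0 ord0) (W ord0 ord_max) (W ord_max ord0) (W ord_max ord_max) => p' q' r' s'.
split=> [hom | /smx_inj[-> -> -> ->] u v]; last first.
  rewrite [u]row2_eta [v]row2_eta !mul_row2_smx !evmul_row2 mul_row2_smx.
  by congr row2; field; rewrite x_nz y_nz.
have := hom (row2 1 0) (row2 1 0); have := hom (row2 0 1) (row2 0 1).
rewrite !mul_row2_smx !evmul_row2 !mul_row2_smx !(mul0r, mulr0, mul1r, mulr1, addr0, add0r).
have xx_nz := mulf_neq0 x_nz x_nz; have yy_nz := mulf_neq0 y_nz y_nz.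
move=> /row2_inj[e_q e_s] /row2_inj[e_p e_r]; congr smx;
  [apply: (mulfI xx_nz); rewrite e_p | apply: (mulfI yy_nz); rewrite e_q
  |apply: (mulfI xx_nz); rewrite e_r | apply: (mulfI yy_nz); rewrite e_s];
  by field; rewrite ?x_nz ?y_nz.
Qed.

Lemma ev_hom_monomial W W' M : W' \in unitmx -> M \in unitmx -> ev_hom W W' M ->
  exists x y, [/\ x != 0, y != 0 & M = smx x 0 0 y \/ M = smx 0 x y 0].
Proof.
move=> W'u; rewrite [M]smx_eta unitmx_smx.
move: (M ord0 ord0) (M ord0 ord_max) (M ord_max ord0) (M ord_max ord_max).
move=> a b c d det_nz hom; have /eqP := hom (row2 1 0) (row2 0 1).
rewrite [evmul W _ _]evmulE map2_row2 !mul_row2_smx.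
rewrite !(mul0r, mulr0, mul1r, mulr1, addr0, add0r).
rewrite row2_0 !mul0mx evmul_eq0 // map2_row2 row2_eq0 !mulf_eq0 => /andP[ac bd].
have [a0 | a_nz] := eqVneq a 0.
  rewrite a0 mul0r sub0r oppr_eq0 mulf_eq0 negb_or in det_nz.
  have /andP[b_nz c_nz] := det_nz.
  move: bd; rewrite (negbTE b_nz) /= => /eqP d0.
  by exists b, c; split=> //; right; rewrite a0 d0.
move: ac; rewrite (negbTE a_nz) /= => /eqP c0.
rewrite c0 mulr0 subr0 mulf_eq0 negb_or in det_nz; have /andP[_ d_nz] := det_nz.
move: bd; rewrite (negbTE d_nz) orbF => /eqP b0.
by exists a, d; split=> //; left; rewrite b0 c0.
Qed.

Lemma ev_iso_swap p q r s : ev_iso (smx p q r s) (smx s r q p).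
Proof.
exists (smx 0 1 1 0); split; last exact: ev_hom_swap.
by rewrite unitmx_smx mul0r sub0r oppr_eq0 mul1r oner_eq0.
Qed.

Lemma ev_iso_rescale x y p q r s W : x != 0 -> y != 0 ->
  W = rescale x y p q r s -> ev_iso (smx p q r s) W.
Proof.
move=> x_nz y_nz ->; exists (smx x 0 0 y); split; last exact/ev_hom_diagP.
by rewrite unitmx_smx mulr0 subr0 mulf_neq0.
Qed.

Lemma ev_iso_rescaleP p q r s W : W \in unitmx -> ev_iso (smx p q r s) W ->
  exists x y, [/\ x != 0, y != 0 & W = rescale x y p q r s \/ W = rescale x y s r q p].
Proof.
move=> Wu [M [Mu hom]].
have [x [y [x_nz y_nz [M_diag | M_anti]]]] := ev_hom_monomial Wu Mu hom.
  by exists x, y; split=> //; left; apply/ev_hom_diagP; rewrite -?M_diag.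
exists y, x; split=> //; right; apply/ev_hom_diagP => //.
have := ev_hom_mul (ev_hom_swap s r q p) hom.
by rewrite M_anti mul_smx !(mul0r, mulr0, mul1r, addr0, add0r).
Qed.

Lemma natural_basis_row2 p q r s a b c d :
  p * s - q * r != 0 -> natural_basis (smx p q r s) (row2 a b) (row2 c d) ->
  [/\ a != 0, b = 0, c = 0 & d != 0] \/ [/\ a = 0, b != 0, c != 0 & d = 0].
Proof.
rewrite -unitmx_smx => Wu [indep [/eqP + _]].
rewrite evmul_eq0 // map2_row2 row2_eq0 !mulf_eq0 => /andP[].
have : row2 a b != 0.
  apply: contra_neq (oner_neq0 K) => f0.
  by case: (indep 1 0) => //; rewrite f0 scaler0 scale0r addr0.
have : row2 c d != 0.
  apply: contra_neq (oner_neq0 K) => f0.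
  by case: (indep 0 1) => //; rewrite f0 scaler0 scale0r addr0.
rewrite !row2_eq0.
by case: (eqVneq a 0) => [->|]; case: (eqVneq b 0) => [->|];
  case: (eqVneq c 0) => [->|]; case: (eqVneq d 0) => [->|]; rewrite ?eqxx // => *;
  [right | left].
Qed.

(* The equations are the coordinates of (a e_1)^2 = w11 (a e_1) + w21 (d e_2)
   and (d e_2)^2 = w12 (a e_1) + w22 (d e_2) in the algebra [smx p q r s]. *)
Lemma pseudo_of_scaled_basis p q r s a d (w11 w12 w21 w22 : K) : a != 0 -> d != 0 ->
  a * a * p = w11 * a -> a * a * r = w21 * d ->
  d * d * q = w12 * a -> d * d * s = w22 * d ->
  pseudo_of w11 w12 w21 w22 = pseudo_of p q r s.
Proof.
move=> a_nz d_nz e_p e_r e_q e_s.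
have nz_iff k k' x w : k != 0 -> k' != 0 -> k * x = w * k' -> (w != 0) = (x != 0).
  move=> k_nz k'_nz /(congr1 (fun t => t == 0)).
  by rewrite !mulf_eq0 (negbTE k_nz) (negbTE k'_nz) orbF /= => ->.
apply/setP => -[]; rewrite !inE;
  [apply: nz_iff e_p | apply: nz_iff e_q | apply: nz_iff e_s | apply: nz_iff e_r];
  by rewrite ?mulf_neq0.
Qed.

Lemma in_square_pseudo_of p q r s : in_square (smx p q r s) (pseudo_of p q r s).
Proof.
exists (row2 1 0), (row2 0 1), p, q, r, s; split=> //.
- split=> [x y|]; last by split; rewrite evmul_row2 -row2_0; congr row2; ring.
  by rewrite !row2Z row2D -row2_0 => /row2_inj; rewrite !(mulr0, mulr1, addr0, add0r).
- by rewrite evmul_row2 !row2Z row2D; congr row2; ring.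
- by rewrite evmul_row2 !row2Z row2D; congr row2; ring.
Qed.

Lemma in_square_smx p q r s E : p * s - q * r != 0 ->
  in_square (smx p q r s) E <-> E = pseudo_of p q r s \/ E = pseudo_of s r q p.
Proof.
move=> det_nz; split.
  case=> f1 [f2 [w11 [w12 [w21 [w22 [+ + + ->]]]]]].
  rewrite [f1]row2_eta [f2]row2_eta.
  move: (f1 0 ord0) (f1 0 ord_max) (f2 0 ord0) (f2 0 ord_max) => a b c d nb.
  rewrite !evmul_row2 !row2Z !row2D.
  case: (natural_basis_row2 det_nz nb) => [[a_nz -> -> d_nz] | [-> b_nz c_nz ->]];
    rewrite !(mulr0, mul0r, addr0, add0r) => /row2_inj[e1 e2] /row2_inj[e3 e4].
    by left; apply: pseudo_of_scaled_basis a_nz d_nz e1 e2 e3 e4.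
  by right; apply: pseudo_of_scaled_basis b_nz c_nz e2 e1 e4 e3.
case=> ->; first exact: in_square_pseudo_of.
exact: in_square_iso (ev_iso_swap s r q p) (in_square_pseudo_of s r q p).
Qed.

Lemma square_is_smx p q r s S : p * s - q * r != 0 ->
  square_is (smx p q r s) S <-> S = [set pseudo_of p q r s; pseudo_of s r q p].
Proof.
move=> det_nz.
have sqE E : in_square (smx p q r s) E <-> E \in [set pseudo_of p q r s; pseudo_of s r q p].
  by rewrite in_square_smx //; split=> /set2P.
split=> [sq | -> //]; apply/setP => E.
by apply/idP/idP => [/sq/sqE | /sqE/sq].
Qed.

Lemma square_is_swap p q r s S : square_is (smx p q r s) S -> square_is (smx s r q p) S.
Proof. by move=> sq E; rewrite -sq; split; apply: in_square_iso; apply: ev_iso_swap. Qed.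

Local Ltac edge_set := apply/setP => -[]; rewrite !inE ?edge_eqE ?eqxx //=.

Lemma square_is_D1 p s : p != 0 -> s != 0 -> square_is (smx p 0 0 s) D1.
Proof.
move=> p_nz s_nz; apply/square_is_smx; first by rewrite mulr0 subr0 mulf_neq0.
have -> : pseudo_of p 0 0 s = [set eL; eR] by edge_set.
have -> : pseudo_of s 0 0 p = [set eL; eR] by edge_set.
by rewrite setUid.
Qed.

Lemma square_is_D2 q r : q != 0 -> r != 0 -> square_is (smx 0 q r 0) D2.
Proof.
move=> q_nz r_nz; apply/square_is_smx; first by rewrite mul0r sub0r oppr_eq0 mulf_neq0.
have -> : pseudo_of 0 q r 0 = [set eT; eD] by edge_set.
have -> : pseudo_of 0 r q 0 = [set eT; eD] by edge_set.
by rewrite setUid.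
Qed.

Lemma square_is_D3 p q s : p != 0 -> q != 0 -> s != 0 -> square_is (smx p q 0 s) D3.
Proof.
move=> p_nz q_nz s_nz; apply/square_is_smx; first by rewrite mulr0 subr0 mulf_neq0.
have -> : pseudo_of p q 0 s = [set eL; eT; eR] by edge_set.
by have -> : pseudo_of s 0 q p = [set eL; eR; eD] by edge_set.
Qed.

Lemma square_is_D4 q r s : q != 0 -> r != 0 -> s != 0 -> square_is (smx 0 q r s) D4.
Proof.
move=> q_nz r_nz s_nz; apply/square_is_smx; first by rewrite mul0r sub0r oppr_eq0 mulf_neq0.
have -> : pseudo_of 0 q r s = [set eT; eR; eD] by edge_set.
have -> : pseudo_of s r q 0 = [set eL; eT; eD] by edge_set.
by rewrite setUC.
Qed.

Lemma square_is_D5 p q r s : p != 0 -> q != 0 -> r != 0 -> s != 0 -> p * s - q * r != 0 ->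
  square_is (smx p q r s) D5.
Proof.
move=> p_nz q_nz r_nz s_nz det_nz; apply/square_is_smx => //.
have -> : pseudo_of p q r s = [set eL; eT; eR; eD] by edge_set.
have -> : pseudo_of s r q p = [set eL; eT; eR; eD] by edge_set.
by rewrite setUid.
Qed.

Lemma square_classification p q r s : p * s - q * r != 0 ->
  square_is (smx p q r s) D1 \/ square_is (smx p q r s) D2 \/ square_is (smx p q r s) D3 \/
  square_is (smx p q r s) D4 \/ square_is (smx p q r s) D5.
Proof.
case: (eqVneq p 0) => [->|p_nz]; case: (eqVneq q 0) => [->|q_nz];
  case: (eqVneq r 0) => [->|r_nz]; case: (eqVneq s 0) => [->|s_nz];
  rewrite ?(mul0r, mulr0, subr0, sub0r, oppr_eq0, eqxx) // => det_nz.
- by right; left; apply: square_is_D2.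
- by do 3 right; left; apply: square_is_D4.
- by left; apply: square_is_D1.
- by do 2 right; left; apply: (square_is_swap (square_is_D3 _ _ _)).
- by do 2 right; left; apply: square_is_D3.
- by do 3 right; left; apply: (square_is_swap (square_is_D4 _ _ _)).
- by do 4 right; apply: square_is_D5.
Qed.

Lemma pseudo_of_in_square p q r s S : square_is (smx p q r s) S -> pseudo_of p q r s \in S.
Proof. by move=> sq; apply/sq/in_square_pseudo_of. Qed.

Lemma pseudo_of_edges p q r s X : pseudo_of p q r s = X ->
  [/\ (p != 0) = (eL \in X), (q != 0) = (eT \in X),
      (r != 0) = (eD \in X) & (s != 0) = (eR \in X)].
Proof. by move=> <-; rewrite !inE. Qed.

Lemma classify_D1 p q r s : square_is (smx p q r s) D1 -> ev_iso (smx p q r s) (A1 K).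
Proof.
move/pseudo_of_in_square; rewrite !inE => /eqP/pseudo_of_edges; rewrite !inE ?edge_eqE /=.
case=> p_nz /negbFE/eqP-> /negbFE/eqP-> s_nz.
by apply: (ev_iso_rescale p_nz s_nz); congr smx; field.
Qed.

Lemma classify_D2 p q r s : square_is (smx p q r s) D2 ->
  exists a, a != 0 /\ ev_iso (smx p q r s) (A2 a).
Proof.
move/pseudo_of_in_square; rewrite !inE => /eqP/pseudo_of_edges; rewrite !inE ?edge_eqE /=.
case=> /negbFE/eqP-> q_nz r_nz /negbFE/eqP->.
exists (q / r); split; first by rewrite mulf_neq0 ?invr_eq0.
by apply: (ev_iso_rescale r_nz r_nz); congr smx; field.
Qed.

Lemma classify_D3 p q r s : square_is (smx p q r s) D3 ->
  exists a, a != 0 /\ ev_iso (smx p q r s) (A3 a).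
Proof.
move/pseudo_of_in_square; rewrite !inE => /orP[] /eqP/pseudo_of_edges; rewrite !inE ?edge_eqE /=.
  case=> p_nz q_nz /negbFE/eqP-> s_nz.
  exists (p * q / s ^+ 2); split; first by rewrite !mulf_neq0 ?invr_eq0 ?expf_neq0.
  by apply: (ev_iso_rescale p_nz s_nz); congr smx; field.
case=> p_nz /negbFE/eqP-> r_nz s_nz.
exists (s * r / p ^+ 2); split; first by rewrite !mulf_neq0 ?invr_eq0 ?expf_neq0.
apply: ev_iso_trans (ev_iso_swap _ _ _ _) _.
by apply: (ev_iso_rescale s_nz p_nz); congr smx; field.
Qed.

Lemma classify_D4 p q r s : square_is (smx p q r s) D4 ->
  exists a, a != 0 /\ ev_iso (smx p q r s) (A4 a).
Proof.
move/pseudo_of_in_square; rewrite !inE => /orP[] /eqP/pseudo_of_edges; rewrite !inE ?edge_eqE /=.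
  case=> p_nz q_nz r_nz /negbFE/eqP->.
  exists (q * r ^+ 2 / p ^+ 3); split; first by rewrite !mulf_neq0 ?invr_eq0 ?expf_neq0.
  apply: ev_iso_trans (ev_iso_swap _ _ _ _) _.
  have x_nz : p ^+ 2 / r != 0 by rewrite mulf_neq0 ?invr_eq0 ?expf_neq0.
  by apply: (ev_iso_rescale x_nz p_nz); congr smx; field; rewrite ?p_nz ?r_nz.
case=> /negbFE/eqP-> q_nz r_nz s_nz.
exists (r * q ^+ 2 / s ^+ 3); split; first by rewrite !mulf_neq0 ?invr_eq0 ?expf_neq0.
have x_nz : s ^+ 2 / q != 0 by rewrite mulf_neq0 ?invr_eq0 ?expf_neq0.
by apply: (ev_iso_rescale x_nz s_nz); congr smx; field; rewrite ?s_nz ?q_nz.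
Qed.

Lemma classify_D5 p q r s : p * s - q * r != 0 -> square_is (smx p q r s) D5 ->
  exists a b, [/\ a != 0, b != 0, a * b != 1 & ev_iso (smx p q r s) (A5 a b)].
Proof.
move=> det_nz /pseudo_of_in_square; rewrite !inE => /eqP/pseudo_of_edges.
rewrite !inE ?edge_eqE /= => -[p_nz q_nz r_nz s_nz].
exists (p * q / s ^+ 2), (s * r / p ^+ 2).
split; try by rewrite !mulf_neq0 ?invr_eq0 ?expf_neq0.
  apply: contraNneq det_nz => ab1; rewrite subr_eq0; apply/eqP.
  by rewrite -[p * s]mul1r -ab1; field; rewrite p_nz s_nz.
by apply: (ev_iso_rescale p_nz s_nz); congr smx; field.
Qed.

Lemma A1_square : square_full (A1 K) /\ square_is (A1 K) D1.
Proof.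
rewrite square_full_smx mulr1 mulr0 subr0 oner_eq0.
by split=> //; apply: square_is_D1; apply: oner_neq0.
Qed.

Lemma A2_square a : a != 0 -> square_full (A2 a) /\ square_is (A2 a) D2.
Proof.
move=> a_nz; rewrite square_full_smx mul0r sub0r oppr_eq0 mulr1.
by split=> //; apply: square_is_D2 (oner_neq0 K).
Qed.

Lemma A3_square a : a != 0 -> square_full (A3 a) /\ square_is (A3 a) D3.
Proof.
move=> a_nz; rewrite square_full_smx mulr1 mulr0 subr0 oner_eq0.
by split=> //; apply: square_is_D3; rewrite ?oner_neq0.
Qed.

Lemma A4_square a : a != 0 -> square_full (A4 a) /\ square_is (A4 a) D4.
Proof.
move=> a_nz; rewrite square_full_smx mul0r sub0r oppr_eq0 mul1r.
by split=> //; apply: square_is_D4; rewrite ?oner_neq0.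
Qed.

Lemma A5_square a b : a != 0 -> b != 0 -> a * b != 1 ->
  square_full (A5 a b) /\ square_is (A5 a b) D5.
Proof.
move=> a_nz b_nz ab_n1; have det_nz : 1 * 1 - a * b != 0 by rewrite mulr1 subr_eq0 eq_sym.
by rewrite square_full_smx; split=> //; apply: square_is_D5; rewrite ?oner_neq0.
Qed.

Lemma A2_iso a b : b != 0 -> ev_iso (A2 a) (A2 b) <-> sim3 a b.
Proof.
move=> b_nz; split=> [|[] [c [c_nz ->]]]; last 2 first.
- have c2_nz : c ^+ 2 != 0 by rewrite expf_neq0.
  by apply: (ev_iso_rescale c_nz c2_nz); congr smx; field; rewrite c_nz.
- have x_nz : b * c ^+ 2 != 0 by rewrite mulf_neq0 ?expf_neq0.
  apply: ev_iso_trans (ev_iso_swap _ _ _ _) _.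
  by apply: (ev_iso_rescale x_nz c_nz); congr smx; field; rewrite ?b_nz ?c_nz.
have A2b_unit : A2 b \in unitmx by rewrite unitmx_smx mul0r sub0r oppr_eq0 mulr1.
case/(ev_iso_rescaleP A2b_unit) => x [y [x_nz y_nz [] /smx_inj[_ eb e1 _]]].
  move/esym/divr1_eq: e1; rewrite mulr1 => y_def.
  by left; exists x; split=> //; rewrite eb y_def; field.
move/esym/divr1_eq: e1 => e1.
by right; exists y; split=> //; apply: (mulfI y_nz); rewrite e1 eb; field.
Qed.

Lemma A3_iso a b : b != 0 -> ev_iso (A3 a) (A3 b) <-> a = b.
Proof.
move=> b_nz; split=> [|->]; last exact: ev_iso_refl.
have A3b_unit : A3 b \in unitmx by rewrite unitmx_smx mulr1 mulr0 subr0 oner_eq0.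
case/(ev_iso_rescaleP A3b_unit) => x [y [x_nz y_nz [] /smx_inj[e1 eb _ e4]]].
  by rewrite eb -(divr1_eq (esym e1)) -(divr1_eq (esym e4)) expr1n divr1 mul1r.
by move: b_nz; rewrite eb mulr0 mul0r eqxx.
Qed.

Lemma A4_iso a b : b != 0 -> ev_iso (A4 a) (A4 b) <-> a = b.
Proof.
move=> b_nz; split=> [|->]; last exact: ev_iso_refl.
have A4b_unit : A4 b \in unitmx by rewrite unitmx_smx mul0r sub0r oppr_eq0 mul1r.
case/(ev_iso_rescaleP A4b_unit) => x [y [x_nz y_nz [] /smx_inj[e1 e2 eb e4]]].
  move: e2 eb; rewrite -(divr1_eq (esym e4)) expr1n mulr1 divr1 => <-.
  by rewrite expr1n divr1 mul1r.
by move: e1; rewrite mul1r => /esym/eqP; rewrite invr_eq0 (negbTE x_nz).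
Qed.

Lemma A5_iso a b a' b' : a' * b' != 1 ->
  ev_iso (A5 a b) (A5 a' b') <-> (a' = a /\ b' = b) \/ (a' = b /\ b' = a).
Proof.
move=> ab'_n1; split=> [|[] [-> ->]]; last 2 first.
- exact: ev_iso_refl.
- exact: ev_iso_swap.
have A5_unit : A5 a' b' \in unitmx by rewrite unitmx_smx mulr1 subr_eq0 eq_sym.
case/(ev_iso_rescaleP A5_unit) => x [y [x_nz y_nz [] /smx_inj[e1 ea eb e4]]];
  rewrite -(divr1_eq (esym e1)) -(divr1_eq (esym e4)) expr1n !divr1 !mul1r in ea eb.
- by left.
- by right.
Qed.

End EvolutionAlgebra2.

Theorem theorem3p7 (K : fieldType) :
  (* the square of A is one of D1, ..., D5 *)
  (forall W : 'M[K]_2, square_full W ->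
     square_is W D1 \/ square_is W D2 \/ square_is W D3 \/
     square_is W D4 \/ square_is W D5) /\
  (* (i) *)
  ((forall W : 'M[K]_2, square_full W -> square_is W D1 -> ev_iso W (A1 K)) /\
   square_full (A1 K) /\ square_is (A1 K) D1) /\
  (* (ii) *)
  ((forall W : 'M[K]_2, square_full W -> square_is W D2 ->
      exists a : K, a != 0 /\ ev_iso W (A2 a)) /\
   (forall a : K, a != 0 -> square_full (A2 a) /\ square_is (A2 a) D2) /\
   (forall a b : K, a != 0 -> b != 0 -> (ev_iso (A2 a) (A2 b) <-> sim3 a b))) /\
  (* (iii) *)
  ((forall W : 'M[K]_2, square_full W -> square_is W D3 ->
      exists a : K, a != 0 /\ ev_iso W (A3 a)) /\
   (forall a : K, a != 0 -> square_full (A3 a) /\ square_is (A3 a) D3) /\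
   (forall a b : K, a != 0 -> b != 0 -> (ev_iso (A3 a) (A3 b) <-> a = b))) /\
  (* (iv) *)
  ((forall W : 'M[K]_2, square_full W -> square_is W D4 ->
      exists a : K, a != 0 /\ ev_iso W (A4 a)) /\
   (forall a : K, a != 0 -> square_full (A4 a) /\ square_is (A4 a) D4) /\
   (forall a b : K, a != 0 -> b != 0 -> (ev_iso (A4 a) (A4 b) <-> a = b))) /\
  (* (v) *)
  ((forall W : 'M[K]_2, square_full W -> square_is W D5 ->
      exists a b : K, [/\ a != 0, b != 0, a * b != 1 & ev_iso W (A5 a b)]) /\
   (forall a b : K, a != 0 -> b != 0 -> a * b != 1 ->
      square_full (A5 a b) /\ square_is (A5 a b) D5) /\
   (forall a b a' b' : K, a != 0 -> b != 0 -> a * b != 1 ->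
      a' != 0 -> b' != 0 -> a' * b' != 1 ->
      (ev_iso (A5 a b) (A5 a' b') <-> (a' = a /\ b' = b) \/ (a' = b /\ b' = a)))).
Proof.
split; first by apply: smx_ind => p q r s /square_full_smx; apply: square_classification.
split; first by split; [apply: smx_ind => p q r s _; apply: classify_D1 | apply: A1_square].
split.
  split; first by apply: smx_ind => p q r s _; apply: classify_D2.
  by split; [apply: A2_square | move=> a b _; apply: A2_iso].
split.
  split; first by apply: smx_ind => p q r s _; apply: classify_D3.
  by split; [apply: A3_square | move=> a b _; apply: A3_iso].
split.
  split; first by apply: smx_ind => p q r s _; apply: classify_D4.
  by split; [apply: A4_square | move=> a b _; apply: A4_iso].
split; first by apply: smx_ind => p q r s /square_full_smx; apply: classify_D5.
by split; [apply: A5_square | move=> a b a' b' _ _ _ _ _; apply: A5_iso].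
Qed.
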